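(* Let $V:P\to B(\mathcal{H})$ be an isometric representation with commuting range projections. Then: (1) for every $g\in G$ the operator $W_g:=V_b^*V_a$, where $g=ab^{-1}$ with $a,b\in P$, does not depend on the choice of $a,b$, and it is a partial isometry; (2) the projections $E_g:=W_gW_g^*$, $g\in G$, pairwise commute; (3) if $g_1,g_2\in G$ satisfy $g_1g_2^{-1}\in P$, then $E_{g_1}\le E_{g_2}$; (4) the map $G\ni g\mapsto W_g\in B(\mathcal{H})$ is strongly continuous; (5) for all $g,h\in G$, $W_gW_h=E_gW_{hg}$.
   Context: Standing assumptions: $G$ is a second countable locally compact group with left Haar measure $dg$ and modular function $\Delta$; $P\subset G$ is a closed subsemigroup with identity $e\in P$, such that $G=PP^{-1}$ and the interior $Int(P)$ of $P$ is dense in $P$. An isometric representation with commuting range projections is a map $V:P\to B(\mathcal{H})$ ($\mathcal{H}$ a Hilbert space) such that $a\mapsto V_a$ and $a\mapsto V_a^*$ are strongly continuous, each $V_a$ is an isometry, $V_aV_b=V_{ba}$ for $a,b\in P$, and the projections $E_a:=V_aV_a^*$ ($a\in P$) pairwise commute. *)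

From Stdlib Require Import Reals ClassicalEpsilon List.
Open Scope R_scope.

Record C := Cmk { Cre : R ; Cim : R }.
Definition C0 : C := Cmk 0 0.
Definition C1 : C := Cmk 1 0.
Definition Cadd (z w : C) : C := Cmk (Cre z + Cre w) (Cim z + Cim w).
Definition Cmul (z w : C) : C :=
  Cmk (Cre z * Cre w - Cim z * Cim w) (Cre z * Cim w + Cim z * Cre w).
Definition Cconj (z : C) : C := Cmk (Cre z) (- Cim z).

Record Hilbert := {
  hcar :> Type;
  h0 : hcar;
  hadd : hcar -> hcar -> hcar;
  hopp : hcar -> hcar;
  hscal : C -> hcar -> hcar;
  hinner : hcar -> hcar -> C;
  hadd_assoc : forall x y z, hadd x (hadd y z) = hadd (hadd x y) z;
  hadd_comm : forall x y, hadd x y = hadd y x;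
  hadd_0 : forall x, hadd h0 x = x;
  hadd_opp : forall x, hadd x (hopp x) = h0;
  hscal_1 : forall x, hscal C1 x = x;
  hscal_mul : forall a b x, hscal (Cmul a b) x = hscal a (hscal b x);
  hscal_addv : forall a x y, hscal a (hadd x y) = hadd (hscal a x) (hscal a y);
  hscal_adds : forall a b x, hscal (Cadd a b) x = hadd (hscal a x) (hscal b x);
  hinner_add : forall x y z, hinner (hadd x y) z = Cadd (hinner x z) (hinner y z);
  hinner_scal : forall a x y, hinner (hscal a x) y = Cmul a (hinner x y);
  hinner_conj : forall x y, hinner y x = Cconj (hinner x y);
  hinner_pos : forall x, 0 <= Cre (hinner x x);
  hinner_def : forall x, hinner x x = C0 -> x = h0;
  hcomplete : forall u : nat -> hcar,
    (forall eps, 0 < eps -> exists N, forall m n, (N <= m)%nat -> (N <= n)%nat ->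
       sqrt (Cre (hinner (hadd (u m) (hopp (u n))) (hadd (u m) (hopp (u n))))) < eps) ->
    exists l, forall eps, 0 < eps -> exists N, forall n, (N <= n)%nat ->
       sqrt (Cre (hinner (hadd (u n) (hopp l)) (hadd (u n) (hopp l)))) < eps
}.
Arguments h0 {_}.
Arguments hadd {_} _ _.
Arguments hopp {_} _.
Arguments hscal {_} _ _.
Arguments hinner {_} _ _.

Definition hsub {H : Hilbert} (x y : H) : H := hadd x (hopp y).
Definition hnorm {H : Hilbert} (x : H) : R := sqrt (Cre (hinner x x)).

Definition ocomp {H : Hilbert} (S T : H -> H) : H -> H := fun x => S (T x).

Definition is_bounded_linear {H : Hilbert} (T : H -> H) : Prop :=
  (forall x y, T (hadd x y) = hadd (T x) (T y)) /\
  (forall a x, T (hscal a x) = hscal a (T x)) /\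
  (exists M, forall x, hnorm (T x) <= M * hnorm x).

Definition is_adjoint {H : Hilbert} (T S : H -> H) : Prop :=
  forall x y, hinner (T x) y = hinner x (S y).

Definition adj {H : Hilbert} (T : H -> H) : H -> H :=
  epsilon (inhabits (fun x : H => x)) (fun S => is_adjoint T S).

Definition is_isometry {H : Hilbert} (T : H -> H) : Prop :=
  is_bounded_linear T /\ forall x, hnorm (T x) = hnorm x.

Definition is_partial_isometry {H : Hilbert} (T : H -> H) : Prop :=
  is_bounded_linear T /\
  forall x, (forall y, T y = h0 -> hinner x y = C0) -> hnorm (T x) = hnorm x.

Definition op_le {H : Hilbert} (S T : H -> H) : Prop :=
  forall x, Cre (hinner (S x) x) <= Cre (hinner (T x) x).

Definition is_compact {T : Type} (opn : (T -> Prop) -> Prop) (K : T -> Prop) : Prop :=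
  forall F : (T -> Prop) -> Prop,
    (forall U, F U -> opn U) ->
    (forall x, K x -> exists U, F U /\ U x) ->
    exists l : list (T -> Prop),
      (forall U, In U l -> F U) /\ (forall x, K x -> exists U, In U l /\ U x).

Record LCGroup := {
  gcar :> Type;
  gmul : gcar -> gcar -> gcar;
  ginv : gcar -> gcar;
  gone : gcar;
  gmul_assoc : forall x y z, gmul x (gmul y z) = gmul (gmul x y) z;
  gmul_1l : forall x, gmul gone x = x;
  gmul_1r : forall x, gmul x gone = x;
  gmul_Vl : forall x, gmul (ginv x) x = gone;
  gmul_Vr : forall x, gmul x (ginv x) = gone;
  gopen : (gcar -> Prop) -> Prop;
  gopen_full : gopen (fun _ => True);
  gopen_inter : forall U W, gopen U -> gopen W -> gopen (fun x => U x /\ W x);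
  gopen_union : forall F : (gcar -> Prop) -> Prop,
      (forall U, F U -> gopen U) -> gopen (fun x => exists U, F U /\ U x);
  gmul_cont : forall U x y, gopen U -> U (gmul x y) ->
      exists A B, gopen A /\ gopen B /\ A x /\ B y /\
                  forall a b, A a -> B b -> U (gmul a b);
  ginv_cont : forall U x, gopen U -> U (ginv x) ->
      exists A, gopen A /\ A x /\ forall a, A a -> U (ginv a);
  ghausdorff : forall x y, x <> y -> exists A B, gopen A /\ gopen B /\ A x /\ B y /\
      forall z, A z -> B z -> False;
  glocally_compact : forall x, exists U K, gopen U /\ U x /\ is_compact gopen K /\
      forall z, U z -> K z;
  gsecond_countable : exists B : nat -> gcar -> Prop, (forall n, gopen (B n)) /\
      forall U x, gopen U -> U x -> exists n, B n x /\ forall z, B n z -> U z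
}.
Arguments gmul {_} _ _.
Arguments ginv {_} _.
Arguments gone {_}.
Arguments gopen {_} _.

Definition interior {G : LCGroup} (P : G -> Prop) (x : G) : Prop :=
  exists O, gopen O /\ O x /\ forall z, O z -> P z.

Definition standing_assumptions (G : LCGroup) (P : G -> Prop) : Prop :=
  gopen (fun x => ~ P x) /\
  P gone /\
  (forall a b, P a -> P b -> P (gmul a b)) /\
  (forall g, exists a b, P a /\ P b /\ g = gmul a (ginv b)) /\
  (forall x, P x -> forall U, gopen U -> U x ->
     exists y, U y /\ interior P y).

Definition strongly_continuous_on {G : LCGroup} {H : Hilbert}
  (D : G -> Prop) (F : G -> H -> H) : Prop :=
  forall (x : H) g, D g -> forall eps, 0 < eps ->
    exists U, gopen U /\ U g /\
      forall h, D h -> U h -> hnorm (hsub (F h x) (F g x)) < eps.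

Definition rangeproj {H : Hilbert} (T : H -> H) : H -> H := ocomp T (adj T).

(* isometric representation with commuting range projections; V is only
   meaningful on P, its values outside P are irrelevant *)
Definition isom_rep_crp {G : LCGroup} {H : Hilbert} (P : G -> Prop)
  (V : G -> H -> H) : Prop :=
  strongly_continuous_on P V /\
  strongly_continuous_on P (fun a => adj (V a)) /\
  (forall a, P a -> is_isometry (V a)) /\
  (forall a b, P a -> P b -> ocomp (V a) (V b) = V (gmul b a)) /\
  (forall a b, P a -> P b ->
     ocomp (rangeproj (V a)) (rangeproj (V b)) = ocomp (rangeproj (V b)) (rangeproj (V a))).

Definition Wop {G : LCGroup} {H : Hilbert} (P : G -> Prop) (V : G -> H -> H)
  (g : G) : H -> H :=
  let ab := epsilon (inhabits (@gone G, @gone G))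
              (fun ab => P (fst ab) /\ P (snd ab) /\ g = gmul (fst ab) (ginv (snd ab))) in
  ocomp (adj (V (snd ab))) (V (fst ab)).

Definition Eop {G : LCGroup} {H : Hilbert} (P : G -> Prop) (V : G -> H -> H)
  (g : G) : H -> H := rangeproj (Wop P V g).

(* Everything rests on an Ore condition: as G = P P^-1, any two elements of P have a common
   right multiple in P, so finitely many elements of G can be written over a common
   denominator, g = a b^-1 and h = c b^-1, or in chained form g = a b^-1 and h = c a^-1.
   For such a decomposition W_g = V_b^* V_a and E_g = V_b^* R_a V_b, where R_a = V_a V_a^* is
   a range projection, and every claim reduces to V_s^* V_s = 1 and the commutation of the R_a.
   Continuity is obtained by taking the numerator a in the interior of P.  The adjoints
   V_a^* exist because the range of an isometry is complete, hence admits orthogonal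
   projections. *)

From Pilot Require Import Defs.
From Stdlib Require Import Reals Lra Psatz ClassicalEpsilon FunctionalExtensionality Classical.
(* Import [Defs] again so that its complex numbers [C] shadow the binomial [C] of [Reals]. *)
Import Defs.
Open Scope R_scope.

Arguments hadd_assoc {_} _ _ _.
Arguments hadd_comm {_} _ _.
Arguments hadd_0 {_} _.
Arguments hadd_opp {_} _.
Arguments hscal_1 {_} _.
Arguments hscal_adds {_} _ _ _.
Arguments hinner_add {_} _ _ _.
Arguments hinner_scal {_} _ _ _.
Arguments hinner_conj {_} _ _.
Arguments hinner_pos {_} _.
Arguments hinner_def {_} _ _.

Lemma C_ext (z w : C) : Cre z = Cre w -> Cim z = Cim w -> z = w.
Proof. destruct z, w; simpl; intros; subst; reflexivity. Qed.

Ltac csolve := apply C_ext; simpl; ring.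

Section HilbertSpace.
Context {H : Hilbert}.
Implicit Types x y z u : H.

Lemma hadd_0r x : hadd x h0 = x.
Proof. rewrite hadd_comm; apply hadd_0. Qed.

Lemma hadd_move_r u x v : hadd u x = v -> u = hadd v (hopp x).
Proof. intros <-. rewrite <- hadd_assoc, hadd_opp. symmetry; apply hadd_0r. Qed.

Lemma hsub_eq0 x y : hsub x y = h0 -> x = y.
Proof.
  intro E. transitivity (hadd (hsub x y) y).
  - unfold hsub. rewrite <- hadd_assoc, (hadd_comm (hopp y)), hadd_opp. symmetry; apply hadd_0r.
  - rewrite E. apply hadd_0.
Qed.

Lemma hscal_0 x : hscal C0 x = h0.
Proof.
  rewrite (hadd_move_r (hscal C0 x) (hscal C0 x) (hscal C0 x)); [apply hadd_opp|].
  rewrite <- hscal_adds. f_equal. csolve.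
Qed.

Lemma hopp_scal x : hopp x = hscal (Cmk (-1) 0) x.
Proof.
  rewrite <- (hadd_0 (hopp x)). symmetry. apply hadd_move_r.
  rewrite <- (hscal_1 x) at 2. rewrite <- hscal_adds, <- (hscal_0 x). f_equal. csolve.
Qed.

Lemma hinner_0l y : hinner h0 y = C0.
Proof. rewrite <- (hscal_0 h0), hinner_scal. csolve. Qed.

Lemma hinner_add_r x y z : hinner x (hadd y z) = Cadd (hinner x y) (hinner x z).
Proof.
  rewrite (hinner_conj (hadd y z) x), hinner_add, (hinner_conj y x), (hinner_conj z x).
  csolve.
Qed.

Lemma hinner_scal_r a x y : hinner x (hscal a y) = Cmul (Cconj a) (hinner x y).
Proof. rewrite (hinner_conj (hscal a y) x), hinner_scal, (hinner_conj y x). csolve. Qed.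

Lemma hext x y : (forall z, hinner x z = hinner y z) -> x = y.
Proof.
  intro E. apply hsub_eq0, hinner_def.
  unfold hsub. rewrite hinner_add, hopp_scal, hinner_scal, !E. csolve.
Qed.

Lemma hext_r x y : (forall z, hinner z x = hinner z y) -> x = y.
Proof.
  intro E. apply hext. intro z. rewrite (hinner_conj z x), (hinner_conj z y), E. reflexivity.
Qed.

End HilbertSpace.

(* A vector identity holds iff it holds after pairing with an arbitrary [z];
   this reduces it to an identity between complex numbers. *)
Ltac vecsolve := apply hext; intro; unfold hsub; rewrite ?hopp_scal;
  repeat (rewrite ?hinner_add, ?hinner_scal, ?hinner_0l); apply C_ext; simpl; field.

Definition hnorm2 {H : Hilbert} (x : H) : R := Cre (hinner x x).

Section Norm.
Context {H : Hilbert}.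
Implicit Types x y : H.

Lemma hnorm2_ge0 x : 0 <= hnorm2 x.
Proof. apply hinner_pos. Qed.

Lemma hnorm_sqrt x : hnorm x = sqrt (hnorm2 x).
Proof. reflexivity. Qed.

Lemma hnorm_ge0 x : 0 <= hnorm x.
Proof. apply sqrt_pos. Qed.

Lemma hnorm_sqr x : hnorm x * hnorm x = hnorm2 x.
Proof. apply sqrt_sqrt, hnorm2_ge0. Qed.

Lemma Cre_hinner_sym x y : Cre (hinner y x) = Cre (hinner x y).
Proof. rewrite hinner_conj. reflexivity. Qed.

Lemma Cre_hinner_scal_r (t : R) x y : Cre (hinner x (hscal (Cmk t 0) y)) = t * Cre (hinner x y).
Proof. rewrite hinner_scal_r. simpl. ring. Qed.

Lemma hnorm2_add x y : hnorm2 (hadd x y) = hnorm2 x + hnorm2 y + 2 * Cre (hinner x y).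
Proof.
  unfold hnorm2. rewrite hinner_add, !hinner_add_r. simpl.
  rewrite (Cre_hinner_sym x y). ring.
Qed.

Lemma hnorm2_scal (t : R) x : hnorm2 (hscal (Cmk t 0) x) = t * t * hnorm2 x.
Proof. unfold hnorm2. rewrite hinner_scal, hinner_scal_r. simpl. ring. Qed.

Lemma parallelogram x y :
  hnorm2 (hadd x y) + hnorm2 (hsub x y) = 2 * hnorm2 x + 2 * hnorm2 y.
Proof.
  unfold hsub. rewrite hopp_scal, !hnorm2_add, hnorm2_scal, Cre_hinner_scal_r. ring.
Qed.

Lemma quadratic_nonneg_discriminant (a b c : R) :
  0 <= c -> (forall t, 0 <= a + 2 * b * t + c * t * t) -> b * b <= a * c.
Proof.
  intros Hc Ht. assert (Ha : 0 <= a) by (specialize (Ht 0); lra).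
  destruct (Rle_lt_or_eq_dec 0 c Hc) as [Hc'|<-].
  - specialize (Ht (- b / c)).
    replace (a + 2 * b * (- b / c) + c * (- b / c) * (- b / c)) with ((a * c - b * b) / c)
      in Ht by (field; lra).
    apply Rmult_le_compat_r with (r := c) in Ht; [|lra].
    unfold Rdiv in Ht. rewrite Rmult_assoc, Rinv_l in Ht by lra. lra.
  - destruct (Req_dec b 0) as [->|Hb]; [lra|].
    specialize (Ht (- (a + 1) / (2 * b))).
    replace (a + 2 * b * (- (a + 1) / (2 * b)) + 0 * (- (a + 1) / (2 * b)) * (- (a + 1) / (2 * b)))
      with (-1) in Ht by (field; lra). lra.
Qed.

Lemma Cre_hinner_sqr_le x y : Cre (hinner x y) * Cre (hinner x y) <= hnorm2 x * hnorm2 y.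
Proof.
  apply quadratic_nonneg_discriminant; [apply hnorm2_ge0|]. intro t.
  pose proof (hnorm2_ge0 (hadd x (hscal (Cmk t 0) y))) as Hp.
  rewrite hnorm2_add, hnorm2_scal, Cre_hinner_scal_r in Hp. lra.
Qed.

Lemma Cre_hinner_le x y : Cre (hinner x y) <= hnorm x * hnorm y.
Proof.
  pose proof (Cre_hinner_sqr_le x y) as CS.
  rewrite <- (hnorm_sqr x), <- (hnorm_sqr y) in CS.
  pose proof (Rmult_le_pos _ _ (hnorm_ge0 x) (hnorm_ge0 y)). nra.
Qed.

Lemma hnorm_add_le x y : hnorm (hadd x y) <= hnorm x + hnorm y.
Proof.
  assert (Hsq : hnorm2 (hadd x y) <= (hnorm x + hnorm y) * (hnorm x + hnorm y)).
  { rewrite hnorm2_add, <- (hnorm_sqr x), <- (hnorm_sqr y). pose proof (Cre_hinner_le x y). nra. }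
  rewrite <- hnorm_sqr in Hsq.
  pose proof (hnorm_ge0 x). pose proof (hnorm_ge0 y). nra.
Qed.

End Norm.

Section Operators.
Context {H : Hilbert}.
Implicit Types (x y u v : H) (T S A B : H -> H).

Lemma linear_add T : is_bounded_linear T -> forall x y, T (hadd x y) = hadd (T x) (T y).
Proof. intros [L _]; exact L. Qed.

Lemma linear_scal T : is_bounded_linear T -> forall a x, T (hscal a x) = hscal a (T x).
Proof. intros [_ [L _]]; exact L. Qed.

Lemma linear_sub T : is_bounded_linear T -> forall x y, T (hsub x y) = hsub (T x) (T y).
Proof.
  intros L x y. unfold hsub. rewrite (linear_add T L), !hopp_scal, (linear_scal T L). reflexivity.
Qed.

Lemma bounded_linear_comp S T :
  is_bounded_linear S -> is_bounded_linear T -> is_bounded_linear (ocomp S T).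
Proof.
  intros LS LT. pose proof LS as [_ [_ [MS HS]]]. pose proof LT as [_ [_ [MT HT]]].
  split; [|split]; unfold ocomp.
  - intros x y. rewrite (linear_add T LT), (linear_add S LS). reflexivity.
  - intros a x. rewrite (linear_scal T LT), (linear_scal S LS). reflexivity.
  - exists (Rabs MS * Rabs MT). intro x.
    eapply Rle_trans; [apply HS|].
    eapply Rle_trans; [apply Rmult_le_compat_r; [apply hnorm_ge0|apply Rle_abs]|].
    rewrite Rmult_assoc. apply Rmult_le_compat_l; [apply Rabs_pos|].
    eapply Rle_trans; [apply HT|].
    apply Rmult_le_compat_r; [apply hnorm_ge0|apply Rle_abs].
Qed.

Lemma isometry_hnorm2 T : is_isometry T -> forall x, hnorm2 (T x) = hnorm2 x.
Proof. intros [_ N] x. apply sqrt_inj; try apply hnorm2_ge0. apply N. Qed.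

Lemma isometry_hinner T : is_isometry T -> forall x y, hinner (T x) (T y) = hinner x y.
Proof.
  intros I x y. pose proof I as [L _].
  assert (Hre : forall x y, Cre (hinner (T x) (T y)) = Cre (hinner x y)).
  { intros a b. pose proof (isometry_hnorm2 T I (hadd a b)) as E.
    rewrite (linear_add T L), !hnorm2_add, !(isometry_hnorm2 T I) in E. lra. }
  apply C_ext; [apply Hre|].
  pose proof (Hre x (hscal (Cmk 0 1) y)) as E.
  rewrite (linear_scal T L), !hinner_scal_r in E. simpl in E. lra.
Qed.

Lemma is_adjoint_unique T S1 S2 : is_adjoint T S1 -> is_adjoint T S2 -> S1 = S2.
Proof.
  intros A1 A2. apply functional_extensionality. intro y. apply hext_r. intro x.
  rewrite <- A1, <- A2. reflexivity.
Qed.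

Lemma adj_eq T S : is_adjoint T S -> adj T = S.
Proof.
  intro A. apply (is_adjoint_unique T); [|exact A].
  unfold adj. apply epsilon_spec. exists S; exact A.
Qed.

Lemma is_adjoint_sym T S : is_adjoint T S -> is_adjoint S T.
Proof. intros A x y. rewrite (hinner_conj y (S x)), <- A, <- hinner_conj. reflexivity. Qed.

Lemma is_adjoint_comp A SA B SB :
  is_adjoint A SA -> is_adjoint B SB -> is_adjoint (ocomp A B) (ocomp SB SA).
Proof. intros HA HB x y. unfold ocomp. rewrite HA, HB. reflexivity. Qed.

Lemma adjoint_add T S : is_adjoint T S -> forall x y, S (hadd x y) = hadd (S x) (S y).
Proof.
  intros A x y. apply hext_r. intro w. rewrite <- A, !hinner_add_r, <- !A. reflexivity.
Qed.

Lemma adjoint_scal T S : is_adjoint T S -> forall a x, S (hscal a x) = hscal a (S x).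
Proof.
  intros A a x. apply hext_r. intro w. rewrite <- A, !hinner_scal_r, <- !A. reflexivity.
Qed.

End Operators.

Lemma inf_approx {A : Type} (f : A -> R) (m : R) (a0 : A) :
  (forall a, m <= f a) ->
  exists D, m <= D /\ (forall a, D <= f a) /\ forall e, 0 < e -> exists a, f a < D + e.
Proof.
  intro Hm. set (E := fun r => exists a, r = - f a).
  assert (HE : bound E) by (exists (- m); intros r [a ->]; specialize (Hm a); lra).
  destruct (completeness E HE) as [M [Hub Hlub]]; [exists (- f a0), a0; reflexivity|].
  exists (- M). split; [|split].
  - assert (M <= - m) by (apply Hlub; intros r [a ->]; specialize (Hm a); lra). lra.
  - intro a. assert (E (- f a)) as Ea by (exists a; reflexivity). specialize (Hub _ Ea). lra.
  - intros e He. apply NNPP. intro Hno.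
    assert (M <= M - e); [|lra].
    apply Hlub. intros r [a ->]. apply Rnot_lt_le. intro Hlt. apply Hno. exists a. lra.
Qed.

Lemma inv_succ_eventually_lt (e : R) :
  0 < e -> exists N, forall n, (N <= n)%nat -> / (INR n + 1) < e.
Proof.
  intro He. destruct (INR_unbounded (/ e)) as [N HN]. exists N. intros n Hn.
  apply le_INR in Hn. pose proof (pos_INR N).
  rewrite <- (Rinv_inv e). apply Rinv_lt_contravar.
  - apply Rmult_lt_0_compat; [apply Rinv_0_lt_compat|]; lra.
  - lra.
Qed.

Lemma sqrt_add_sqr_le (D e : R) : 0 <= D -> 0 <= e -> sqrt (D + e * e) <= sqrt D + e.
Proof.
  intros HD He. pose proof (sqrt_pos D). pose proof (sqrt_sqrt D HD).
  rewrite <- (sqrt_square (sqrt D + e)) by lra. apply sqrt_le_1_alt. nra.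
Qed.

(* Best approximation of [y] by the range of an isometry [T]: the range is complete, so a
   minimizing sequence converges, and at the minimum the error is orthogonal to the range. *)
Section BestApproximation.
Context {H : Hilbert} (T : H -> H) (y : H).
Hypothesis T_iso : is_isometry T.
Let T_lin : is_bounded_linear T := proj1 T_iso.

Lemma near_minimizers_close (D e1 e2 : R) (u v : H) :
  (forall w, D <= hnorm2 (hsub y (T w))) ->
  hnorm2 (hsub y (T u)) < D + e1 -> hnorm2 (hsub y (T v)) < D + e2 ->
  hnorm2 (hsub u v) <= 2 * e1 + 2 * e2.
Proof.
  intros HD Hu Hv.
  set (mid := hscal (Cmk (/ 2) 0) (hadd u v)).
  pose proof (parallelogram (hsub y (T u)) (hsub y (T v))) as Pl.
  assert (Esum : hadd (hsub y (T u)) (hsub y (T v)) = hscal (Cmk 2 0) (hsub y (T mid))).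
  { unfold mid. rewrite (linear_scal T T_lin), (linear_add T T_lin). vecsolve. }
  assert (Ediff : hsub (hsub y (T u)) (hsub y (T v)) = T (hsub v u)).
  { rewrite (linear_sub T T_lin). vecsolve. }
  assert (Esym : hsub v u = hscal (Cmk (-1) 0) (hsub u v)) by vecsolve.
  rewrite Esum, Ediff, hnorm2_scal, (isometry_hnorm2 T T_iso), Esym, hnorm2_scal in Pl.
  specialize (HD mid). lra.
Qed.

Lemma minimizer_orthogonal (l : H) :
  (forall w, hnorm2 (hsub y (T l)) <= hnorm2 (hsub y (T w))) ->
  forall w, hinner (T w) (hsub y (T l)) = C0.
Proof.
  intro Hmin. set (z := hsub y (T l)).
  assert (Hre : forall w, Cre (hinner z (T w)) = 0).
  { intro w. set (c := Cre (hinner z (T w))).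
    assert (c * c <= 0 * hnorm2 (T w)); [|nra].
    apply quadratic_nonneg_discriminant; [apply hnorm2_ge0|]. intro s.
    specialize (Hmin (hadd l (hscal (Cmk (- s) 0) w))).
    assert (Es : hsub y (T (hadd l (hscal (Cmk (- s) 0) w))) = hadd z (hscal (Cmk s 0) (T w)))
      by (unfold z; rewrite (linear_add T T_lin), (linear_scal T T_lin); vecsolve).
    rewrite Es, hnorm2_add, hnorm2_scal, Cre_hinner_scal_r in Hmin. fold z c in Hmin. lra. }
  intro w. rewrite hinner_conj.
  assert (Hi := Hre (hscal (Cmk 0 1) w)).
  rewrite (linear_scal T T_lin), hinner_scal_r in Hi. simpl in Hi.
  assert (Hr := Hre w). apply C_ext; simpl; lra.
Qed.

Lemma minimizer_exists : exists l, forall w, hnorm2 (hsub y (T l)) <= hnorm2 (hsub y (T w)).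
Proof.
  set (f := fun u => hnorm2 (hsub y (T u))).
  destruct (inf_approx f 0 h0 (fun u => hnorm2_ge0 _)) as [D [D0 [HD Happ]]].
  assert (Hep : forall n : nat, 0 < / (INR n + 1))
    by (intro n; apply Rinv_0_lt_compat; pose proof (pos_INR n); lra).
  destruct (choice (fun n u => f u < D + / (INR n + 1)) (fun n => Happ _ (Hep n))) as [u Hu].
  assert (Hcauchy : forall eps, 0 < eps -> exists N, forall m n, (N <= m)%nat -> (N <= n)%nat ->
            hnorm (hsub (u m) (u n)) < eps).
  { intros eps Heps. destruct (inv_succ_eventually_lt (eps * eps / 4)) as [N HN]; [nra|].
    exists N. intros m n Hm Hn.
    pose proof (near_minimizers_close _ _ _ (u m) (u n) HD (Hu m) (Hu n)).
    pose proof (HN m Hm). pose proof (HN n Hn).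
    rewrite hnorm_sqrt, <- (sqrt_square eps) by lra. apply sqrt_lt_1_alt.
    split; [apply hnorm2_ge0|lra]. }
  destruct (hcomplete H u Hcauchy) as [l Hl].
  exists l. intro w. apply Rle_trans with D; [|apply HD].
  apply sqrt_le_0; [apply hnorm2_ge0|exact D0|]. apply Rle_plus_epsilon. intros e He.
  destruct (Hl (e / 2)) as [N1 HN1]; [lra|].
  destruct (inv_succ_eventually_lt (e / 2 * (e / 2))) as [N2 HN2]; [nra|].
  set (n := Nat.max N1 N2).
  specialize (HN1 n (Nat.le_max_l _ _)). specialize (HN2 n (Nat.le_max_r _ _)).
  assert (Esplit : hsub y (T l) = hadd (hsub y (T (u n))) (T (hsub (u n) l)))
    by (rewrite (linear_sub T T_lin); vecsolve).
  change (sqrt (hnorm2 (hsub y (T l)))) with (hnorm (hsub y (T l))).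
  rewrite Esplit. eapply Rle_trans; [apply hnorm_add_le|].
  rewrite (proj2 T_iso).
  assert (hnorm (hsub y (T (u n))) <= sqrt D + e / 2); [|change (hnorm (hsub (u n) l) < e / 2) in HN1; lra].
  eapply Rle_trans; [|apply sqrt_add_sqr_le; lra].
  rewrite hnorm_sqrt. apply sqrt_le_1_alt. specialize (Hu n). unfold f in Hu. lra.
Qed.

End BestApproximation.

Section IsometryAdjoint.
Context {H : Hilbert}.
Implicit Types (x y : H) (T : H -> H).

Lemma isometry_adjoint_exists T : is_isometry T -> exists S, is_adjoint T S.
Proof.
  intro I.
  destruct (choice _ (fun y => minimizer_exists T y I)) as [S HS].
  exists S. intros w y.
  assert (Ey : y = hadd (T (S y)) (hsub y (T (S y)))) by vecsolve.
  rewrite Ey at 1. rewrite hinner_add_r, (minimizer_orthogonal T y I _ (HS y)), (isometry_hinner T I).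
  csolve.
Qed.

Lemma isometry_adj T : is_isometry T -> is_adjoint T (adj T).
Proof. intro I. destruct (isometry_adjoint_exists T I) as [S AS]. rewrite (adj_eq T S AS). exact AS. Qed.

Lemma adj_isometryK T : is_isometry T -> forall x, adj T (T x) = x.
Proof.
  intros I x. apply hext_r. intro w. rewrite <- (isometry_adj T I), (isometry_hinner T I). reflexivity.
Qed.

Lemma adj_isometry_hnorm_le T : is_isometry T -> forall y, hnorm (adj T y) <= hnorm y.
Proof.
  intros I y. pose proof (Cre_hinner_le (T (adj T y)) y) as CS.
  rewrite (proj2 I) in CS.
  assert (E : Cre (hinner (T (adj T y)) y) = hnorm (adj T y) * hnorm (adj T y))
    by (rewrite hnorm_sqr; unfold hnorm2; rewrite (isometry_adj T I); reflexivity).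
  rewrite E in CS. pose proof (hnorm_ge0 (adj T y)). pose proof (hnorm_ge0 y). nra.
Qed.

Lemma adj_isometry_hnorm2_le T : is_isometry T -> forall y, hnorm2 (adj T y) <= hnorm2 y.
Proof.
  intros I y. rewrite <- !hnorm_sqr. pose proof (adj_isometry_hnorm_le T I y).
  pose proof (hnorm_ge0 (adj T y)). nra.
Qed.

Lemma adj_isometry_bounded_linear T : is_isometry T -> is_bounded_linear (adj T).
Proof.
  intro I. pose proof (isometry_adj T I) as A. split; [|split].
  - exact (adjoint_add T _ A).
  - exact (adjoint_scal T _ A).
  - exists 1. intro x. rewrite Rmult_1_l. apply (adj_isometry_hnorm_le T I).
Qed.

End IsometryAdjoint.

Section RangeProjections.
Context {H : Hilbert}.
Implicit Types (A B Q S X Y : H -> H).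

Lemma rangeproj_adj_comp A B : is_isometry A -> is_isometry B ->
  rangeproj (ocomp (adj B) A) = ocomp (adj B) (ocomp (rangeproj A) B).
Proof.
  intros IA IB. unfold rangeproj.
  rewrite (adj_eq (ocomp (adj B) A) (ocomp (adj A) B)); [reflexivity|].
  apply is_adjoint_comp; [apply is_adjoint_sym|]; apply isometry_adj; assumption.
Qed.

Lemma adj_comp_partial_isometry A B : is_isometry A -> is_isometry B ->
  ocomp (rangeproj A) (rangeproj B) = ocomp (rangeproj B) (rangeproj A) ->
  is_partial_isometry (ocomp (adj B) A).
Proof.
  intros IA IB Hcomm. set (W := ocomp (adj B) A).
  assert (LW : is_bounded_linear W)
    by (apply bounded_linear_comp; [apply adj_isometry_bounded_linear|apply IA]; assumption).
  split; [exact LW|]. intros x Hx.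
  (* [x] and [Q] have the same image under [W], so [x - Q] is in the kernel of [W]. *)
  set (Q := adj A (B (W x))).
  assert (WQ : W Q = W x).
  { pose proof (f_equal (fun F => adj B (F (A x))) Hcomm) as E.
    cbv beta delta [ocomp rangeproj] in E. rewrite (adj_isometryK A IA), (adj_isometryK B IB) in E.
    exact E. }
  assert (Hker : W (hsub x Q) = h0) by (rewrite (linear_sub W LW), WQ; apply hadd_opp).
  specialize (Hx _ Hker). apply (f_equal Cre) in Hx.
  unfold hsub in Hx. rewrite hinner_add_r, hopp_scal, hinner_scal_r in Hx. simpl in Hx.
  assert (EQ : Cre (hinner x Q) = hnorm2 (W x)).
  { unfold Q. rewrite <- (isometry_adj A IA), Cre_hinner_sym, (isometry_adj B IB). reflexivity. }
  unfold hnorm. f_equal. change (hnorm2 (W x) = hnorm2 x). unfold hnorm2 at 2. lra.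
Qed.

Lemma op_le_conj B S X Y : is_adjoint B S -> op_le X Y ->
  op_le (ocomp S (ocomp X B)) (ocomp S (ocomp Y B)).
Proof. intros A Hle x. unfold ocomp. rewrite !(is_adjoint_sym _ _ A). apply Hle. Qed.

Lemma rangeproj_comp_le A Q : is_isometry A -> is_isometry Q ->
  op_le (rangeproj (ocomp A Q)) (rangeproj A).
Proof.
  intros IA IQ x. unfold rangeproj.
  rewrite (adj_eq (ocomp A Q) (ocomp (adj Q) (adj A)))
    by (apply is_adjoint_comp; apply isometry_adj; assumption).
  unfold ocomp. rewrite !(isometry_adj _ IA), (isometry_adj _ IQ).
  apply (adj_isometry_hnorm2_le Q IQ).
Qed.

End RangeProjections.

Arguments gmul_assoc {_} _ _ _.
Arguments gmul_1l {_} _.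
Arguments gmul_1r {_} _.
Arguments gmul_Vl {_} _.
Arguments gmul_Vr {_} _.
Arguments gopen_full {_}.
Arguments gopen_inter {_} _ _ _ _.
Arguments gmul_cont {_} _ _ _ _ _.

Section GroupFacts.
Context {G : LCGroup}.
Implicit Types x y g b : G.

Lemma ginv_unique x y : gmul x y = gone -> x = ginv y.
Proof. intro E. rewrite <- (gmul_1r x), <- (gmul_Vr y), gmul_assoc, E. apply gmul_1l. Qed.

Lemma ginv_mul x y : ginv (gmul x y) = gmul (ginv y) (ginv x).
Proof.
  symmetry. apply ginv_unique.
  rewrite gmul_assoc, <- (gmul_assoc (ginv y)), gmul_Vl, gmul_1r, gmul_Vl. reflexivity.
Qed.

Lemma ginvK x : ginv (ginv x) = x.
Proof. symmetry. apply ginv_unique, gmul_Vr. Qed.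

Lemma gmulK x y : gmul (gmul x y) (ginv y) = x.
Proof. rewrite <- gmul_assoc, gmul_Vr. apply gmul_1r. Qed.

Lemma gmulKV x y : gmul (gmul x (ginv y)) y = x.
Proof. rewrite <- gmul_assoc, gmul_Vl. apply gmul_1r. Qed.

Lemma right_translation_nbhd (U : G -> Prop) g b : gopen U -> U (gmul g b) ->
  exists A, gopen A /\ A g /\ forall h, A h -> U (gmul h b).
Proof.
  intros HU Ugb. destruct (gmul_cont U g b HU Ugb) as [A [B [HA [_ [Ag [Bb HAB]]]]]].
  exists A. split; [exact HA|split; [exact Ag|]]. intros h Ah. apply HAB; assumption.
Qed.

End GroupFacts.

Ltac gsimpl := repeat rewrite ?ginv_mul, ?ginvK, ?gmul_assoc, ?gmulK, ?gmulKV,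
  ?gmul_Vr, ?gmul_Vl, ?gmul_1l, ?gmul_1r.

Section Decompositions.
Context {G : LCGroup} (P : G -> Prop).
Hypothesis SA : standing_assumptions G P.

Lemma P_mul a b : P a -> P b -> P (gmul a b).
Proof. destruct SA as [_ [_ [M _]]]. apply M. Qed.

Lemma P_decomposition g : exists a b, P a /\ P b /\ g = gmul a (ginv b).
Proof. destruct SA as [_ [_ [_ [D _]]]]. apply D. Qed.

Lemma ore_condition b d : P b -> P d -> exists s t, P s /\ P t /\ gmul b s = gmul d t.
Proof.
  intros Pb Pd. destruct (P_decomposition (gmul (ginv b) d)) as [s [t [Ps [Pt E]]]].
  exists s, t. split; [exact Ps|split; [exact Pt|]].
  replace d with (gmul b (gmul (ginv b) d)) by (gsimpl; reflexivity).
  rewrite E. gsimpl. reflexivity.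
Qed.

Lemma chained_decomposition g h :
  exists a b c, P a /\ P b /\ P c /\ g = gmul a (ginv b) /\ h = gmul c (ginv a).
Proof.
  destruct (P_decomposition g) as [a [b [Pa [Pb Eg]]]].
  destruct (P_decomposition h) as [c [d [Pc [Pd Eh]]]].
  destruct (ore_condition a d Pa Pd) as [s [t [Ps [Pt Est]]]].
  exists (gmul a s), (gmul b s), (gmul c t).
  repeat split; try (apply P_mul; assumption).
  - rewrite Eg. gsimpl. reflexivity.
  - rewrite Eh, Est. gsimpl. reflexivity.
Qed.

Lemma common_denominator g h :
  exists a b c, P a /\ P b /\ P c /\ g = gmul a (ginv b) /\ h = gmul c (ginv b).
Proof.
  destruct (chained_decomposition g (gmul h (ginv g))) as [a [b [c [Pa [Pb [Pc [Eg Eh]]]]]]].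
  exists a, b, c. repeat split; try assumption.
  replace h with (gmul (gmul h (ginv g)) g) by (gsimpl; reflexivity).
  rewrite Eh, Eg. gsimpl. reflexivity.
Qed.

Lemma interior_mul_l a y : P a -> interior P y -> interior P (gmul a y).
Proof.
  intros Pa [O [HO [Oy OP]]].
  destruct (gmul_cont O (ginv a) (gmul a y) HO) as [A [B [_ [HB [Aa [By HAB]]]]]].
  { gsimpl. exact Oy. }
  exists B. split; [exact HB|split; [exact By|]]. intros z Bz.
  replace z with (gmul a (gmul (ginv a) z)) by (gsimpl; reflexivity).
  apply P_mul; [exact Pa|]. apply OP, HAB; assumption.
Qed.

Lemma interior_decomposition g : exists a b, interior P a /\ P b /\ g = gmul a (ginv b).
Proof.
  pose proof SA as [_ [Pe [_ [_ Dense]]]].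
  destruct (Dense gone Pe (fun _ => True) gopen_full I) as [y [_ Iy]].
  destruct (P_decomposition g) as [a [b [Pa [Pb Eg]]]].
  exists (gmul a y), (gmul b y). split; [|split].
  - apply interior_mul_l; assumption.
  - destruct Iy as [O [_ [Oy OP]]]. apply P_mul; [exact Pb|]. apply OP, Oy.
  - rewrite Eg. gsimpl. reflexivity.
Qed.

End Decompositions.

Section IsometricRepresentation.
Context {G : LCGroup} {H : Hilbert} (P : G -> Prop) (V : G -> H -> H).
Hypothesis SA : standing_assumptions G P.
Hypothesis Rep : isom_rep_crp P V.

Lemma V_isometry a : P a -> is_isometry (V a).
Proof. destruct Rep as [_ [_ [I _]]]. apply I. Qed.

Lemma V_comp a b : P a -> P b -> ocomp (V a) (V b) = V (gmul b a).
Proof. destruct Rep as [_ [_ [_ [M _]]]]. apply M. Qed.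

Lemma adj_V_comp a b : P a -> P b -> adj (V (gmul b a)) = ocomp (adj (V b)) (adj (V a)).
Proof.
  intros Pa Pb. rewrite <- (V_comp a b Pa Pb). apply adj_eq.
  apply is_adjoint_comp; apply isometry_adj, V_isometry; assumption.
Qed.

Lemma V_range_comm a b x : P a -> P b ->
  V a (adj (V a) (V b (adj (V b) x))) = V b (adj (V b) (V a (adj (V a) x))).
Proof.
  destruct Rep as [_ [_ [_ [_ Cm]]]]. intros Pa Pb.
  exact (f_equal (fun F => F x) (Cm a b Pa Pb)).
Qed.

Lemma Vpair_shift a b s : P a -> P b -> P s ->
  ocomp (adj (V (gmul b s))) (V (gmul a s)) = ocomp (adj (V b)) (V a).
Proof.
  intros Pa Pb Ps. rewrite (adj_V_comp s b Ps Pb), <- (V_comp s a Ps Pa).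
  apply functional_extensionality. intro x. unfold ocomp.
  rewrite (adj_isometryK _ (V_isometry s Ps)). reflexivity.
Qed.

Lemma Vpair_indep a b c d : P a -> P b -> P c -> P d ->
  gmul a (ginv b) = gmul c (ginv d) ->
  ocomp (adj (V b)) (V a) = ocomp (adj (V d)) (V c).
Proof.
  intros Pa Pb Pc Pd E.
  destruct (ore_condition P SA b d Pb Pd) as [s [t [Ps [Pt Est]]]].
  assert (Eas : gmul a s = gmul c t).
  { replace a with (gmul (gmul a (ginv b)) b) by (gsimpl; reflexivity).
    replace c with (gmul (gmul c (ginv d)) d) by (gsimpl; reflexivity).
    rewrite E, <- !gmul_assoc, Est. reflexivity. }
  rewrite <- (Vpair_shift a b s), <- (Vpair_shift c d t) by assumption.
  rewrite Est, Eas. reflexivity.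
Qed.

Lemma Wop_eq g a b : P a -> P b -> g = gmul a (ginv b) -> Wop P V g = ocomp (adj (V b)) (V a).
Proof.
  intros Pa Pb E. unfold Wop.
  set (ab := epsilon _ _).
  assert (Hab : P (fst ab) /\ P (snd ab) /\ g = gmul (fst ab) (ginv (snd ab)))
    by (apply epsilon_spec; exists (a, b); auto).
  destruct Hab as [P1 [P2 E2]].
  apply Vpair_indep; auto. rewrite <- E2, <- E. reflexivity.
Qed.

Lemma Eop_eq g a b : P a -> P b -> g = gmul a (ginv b) ->
  Eop P V g = ocomp (adj (V b)) (ocomp (rangeproj (V a)) (V b)).
Proof.
  intros Pa Pb E. unfold Eop. rewrite (Wop_eq g a b Pa Pb E).
  apply rangeproj_adj_comp; apply V_isometry; assumption.
Qed.

Lemma Wop_partial_isometry g : is_partial_isometry (Wop P V g).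
Proof.
  destruct (P_decomposition P SA g) as [a [b [Pa [Pb Eg]]]].
  rewrite (Wop_eq g a b Pa Pb Eg).
  apply adj_comp_partial_isometry; try (apply V_isometry; assumption).
  apply functional_extensionality. intro x. apply V_range_comm; assumption.
Qed.

Lemma Eop_comm g h : ocomp (Eop P V g) (Eop P V h) = ocomp (Eop P V h) (Eop P V g).
Proof.
  destruct (common_denominator P SA g h) as [a [b [c [Pa [Pb [Pc [Eg Eh]]]]]]].
  rewrite (Eop_eq g a b), (Eop_eq h c b) by assumption.
  apply functional_extensionality. intro x. cbv beta delta [ocomp rangeproj]. f_equal.
  rewrite (V_range_comm a b), (V_range_comm a c), (V_range_comm b c) by assumption.
  reflexivity.
Qed.

Lemma Eop_mono g1 g2 : P (gmul g1 (ginv g2)) -> op_le (Eop P V g1) (Eop P V g2).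
Proof.
  intro Pp. destruct (P_decomposition P SA g2) as [a [b [Pa [Pb Eg2]]]].
  set (p := gmul g1 (ginv g2)) in *.
  assert (Eg1 : g1 = gmul (gmul p a) (ginv b)) by (unfold p; rewrite Eg2; gsimpl; reflexivity).
  rewrite (Eop_eq g1 (gmul p a) b), (Eop_eq g2 a b), <- (V_comp a p)
    by first [assumption | apply (P_mul P SA); assumption].
  apply op_le_conj.
  - apply isometry_adj, V_isometry, Pb.
  - apply rangeproj_comp_le; apply V_isometry; assumption.
Qed.

(* Write [g = a b^-1] with [a] interior to [P]: then [h b] stays in [P] for [h] near [g],
   so that [W_h = V_b^* V_(h b)] near [g] and continuity of [V] at [a] transfers to [W]. *)
Lemma Wop_strongly_continuous : strongly_continuous_on (fun _ => True) (Wop P V).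
Proof.
  intros x g _ eps Heps.
  destruct (interior_decomposition P SA g) as [a [b [[O [HO [Oa OP]]] [Pb Eg]]]].
  destruct (proj1 Rep x a (OP a Oa) eps Heps) as [U [HU [Ua HUc]]].
  destruct (right_translation_nbhd (fun z => O z /\ U z) g b) as [A [HA [Ag HAc]]].
  - apply gopen_inter; assumption.
  - rewrite Eg. gsimpl. split; assumption.
  - exists A. split; [exact HA|split; [exact Ag|]].
    intros h _ Ah. destruct (HAc h Ah) as [Ohb Uhb].
    rewrite (Wop_eq h (gmul h b) b (OP _ Ohb) Pb), (Wop_eq g a b (OP a Oa) Pb Eg)
      by (gsimpl; reflexivity).
    unfold ocomp.
    rewrite <- (linear_sub _ (adj_isometry_bounded_linear _ (V_isometry b Pb))).
    eapply Rle_lt_trans; [apply (adj_isometry_hnorm_le _ (V_isometry b Pb))|].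
    apply HUc; [apply OP|]; assumption.
Qed.

Lemma Wop_mul g h : ocomp (Wop P V g) (Wop P V h) = ocomp (Eop P V g) (Wop P V (gmul h g)).
Proof.
  destruct (chained_decomposition P SA g h) as [a [b [c [Pa [Pb [Pc [Eg Eh]]]]]]].
  assert (Ehg : gmul h g = gmul c (ginv b)) by (rewrite Eh, Eg; gsimpl; reflexivity).
  rewrite (Wop_eq g a b), (Wop_eq h c a), (Wop_eq _ c b), (Eop_eq g a b) by assumption.
  apply functional_extensionality. intro x. cbv beta delta [ocomp rangeproj].
  rewrite (V_range_comm a b), (adj_isometryK _ (V_isometry b Pb)) by assumption.
  reflexivity.
Qed.

End IsometricRepresentation.

Theorem mainTheorem1 (G : LCGroup) (P : G -> Prop) (H : Hilbert) (V : G -> H -> H) :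
  standing_assumptions G P ->
  isom_rep_crp P V ->
  ((forall a b c d, P a -> P b -> P c -> P d ->
      gmul a (ginv b) = gmul c (ginv d) ->
      ocomp (adj (V b)) (V a) = ocomp (adj (V d)) (V c)) /\
   (forall g, is_partial_isometry (Wop P V g))) /\
  (forall g h, ocomp (Eop P V g) (Eop P V h) = ocomp (Eop P V h) (Eop P V g)) /\
  (forall g1 g2, P (gmul g1 (ginv g2)) -> op_le (Eop P V g1) (Eop P V g2)) /\
  strongly_continuous_on (fun _ => True) (Wop P V) /\
  (forall g h, ocomp (Wop P V g) (Wop P V h) = ocomp (Eop P V g) (Wop P V (gmul h g))).
Proof.
  intros SA Rep.
  split; [split|split; [|split; [|split]]].
  - exact (Vpair_indep P V SA Rep).
  - exact (Wop_partial_isometry P V SA Rep).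
  - exact (Eop_comm P V SA Rep).
  - exact (Eop_mono P V SA Rep).
  - exact (Wop_strongly_continuous P V SA Rep).
  - exact (Wop_mul P V SA Rep).
Qed.
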